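(* Let $\mathcal{P}$ be the powerset monad (unit $x\mapsto\{x\}$, multiplication union), $\mathcal{V}=[0,1]_\oplus$ and $\mathit{ev}_{\mathcal{P}}=\sup\colon\mathcal{P}[0,1]\to[0,1]$ (with $\sup\emptyset=0$). For sets $X_1,X_2$ define $g_{X_1,X_2}\colon\mathcal{P}(X_1+X_2)\to\mathcal{P}X_1+\mathcal{P}X_2$ by $g_{X_1,X_2}(X')=X'\cap X_1$ (in the left summand) if $X'\cap X_1\neq\emptyset$, and $g_{X_1,X_2}(X')=X'$ (in the right summand, as then $X'\subseteq X_2$) otherwise. Then $g$ is a natural transformation that is compatible with the unit and the multiplication of $\mathcal{P}$ and is well-behaved with respect to $\sup$.
   Context: $[0,1]_\oplus$ is the quantale on $[0,1]$ with the reversed order ($a\sqsubseteq b$ iff $a\ge b$) and truncated addition $a\oplus b=\min(a+b,1)$; hence its top element is $\top=0$ and its bottom is $\bot=1$. For a monad $(T,\eta,\mu)$, a natural transformation $g\colon T((-)+(-))\Rightarrow T(-)+T(-)$ is compatible with the unit if $g_{Y_1,Y_2}\circ\eta_{Y_1+Y_2}=\eta_{Y_1}+\eta_{Y_2}$, and with the multiplication if $g_{Y_1,Y_2}\circ\mu_{Y_1+Y_2}=(\mu_{Y_1}+\mu_{Y_2})\circ g_{TY_1,TY_2}\circ Tg_{Y_1,Y_2}$, for all sets $Y_1,Y_2$. It is well-behaved with respect to $\mathit{ev}_T\colon T\mathcal{V}\to\mathcal{V}$ if for all sets $X_1,X_2$ and maps $f_i\colon X_i\to\mathcal{V}$: $\mathit{ev}_T\circ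 T[f_1,\top_{X_2}]=[\mathit{ev}_T\circ Tf_1,\top_{TX_2}]\circ g_{X_1,X_2}$, $\mathit{ev}_T\circ T[\bot_{X_1},f_2]=[\bot_{TX_1},\mathit{ev}_T\circ Tf_2]\circ g_{X_1,X_2}$, and $\mathit{ev}_T\circ T[\bot_{X_1},\top_{X_2}]=[\bot_{TX_1},\top_{TX_2}]\circ g_{X_1,X_2}$, where $\top_Z,\bot_Z$ are constant maps on $Z$ with values $\top,\bot$ of the quantale. *)

From HB Require Import structures.
From mathcomp Require Import all_boot all_order all_algebra.
From mathcomp Require Import boolp classical_sets reals.
Set Implicit Arguments. Unset Strict Implicit. Unset Printing Implicit Defensive.
Import Order.TTheory GRing.Theory Num.Theory.
Local Open Scope ring_scope.
Local Open Scope classical_set_scope.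

Definition Pmap (X Y : Type) (f : X -> Y) (A : set X) : set Y := f @` A.
Definition Peta (X : Type) (x : X) : set X := [set x].
Definition Pmu (X : Type) (A : set (set X)) : set X := \bigcup_(B in A) B.

Definition copair (X1 X2 Y : Type) (f1 : X1 -> Y) (f2 : X2 -> Y)
  (s : X1 + X2) : Y :=
  match s with inl x => f1 x | inr y => f2 y end.
Definition summap (X1 X2 Y1 Y2 : Type) (f1 : X1 -> Y1) (f2 : X2 -> Y2)
  (s : X1 + X2) : Y1 + Y2 :=
  match s with inl x => inl (f1 x) | inr y => inr (f2 y) end.

Definition gP (X1 X2 : Type) (A : set (X1 + X2)) : set X1 + set X2 :=
  if pselect (exists x, A (inl x))
  then inl [set x | A (inl x)]
  else inr [set y | A (inr y)].

Definition V (R : realType) := {x : R | (0 <= x)%R && (x <= 1)%R}.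
(* top = 0, bottom = 1 (reversed order) *)
Lemma zero_in01 (R : realType) : (0 : R) <= (0 : R) <= (1 : R).
Proof. by rewrite lexx ler01. Qed.
Lemma one_in01 (R : realType) : (0 : R) <= (1 : R) <= (1 : R).
Proof. by rewrite lexx ler01. Qed.
Definition topV (R : realType) : V R := exist _ 0 (zero_in01 R).
Definition botV (R : realType) : V R := exist _ 1 (one_in01 R).

Lemma sup_in01 (R : realType) (A : set (V R)) :
  0 <= sup ((@proj1_sig _ _) @` A) <= 1.
Proof.
set S := (@proj1_sig _ _) @` A.
have [[a Sa]|S0] := pselect (exists a, S a); last first.
  have -> : S = set0 by apply/seteqP; split=> x // Sx; apply: S0; exists x.
  by rewrite sup0 lexx ler01.
have ub : ubound S 1 by move=> _ [[x xin] _ <-]; by case/andP: (xin).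
have hs : has_sup S by split; [exists a | exists 1].
apply/andP; split.
  have a0 : 0 <= a by case: Sa => -[x xin] _ <-; by case/andP: (xin).
  apply: le_trans a0 _; apply: sup_ubound => //; by case: hs.
by apply: ge_sup => //; exists a.
Qed.

(* ev_P = sup : P[0,1] -> [0,1], with sup of the empty set = 0 *)
Definition evP (R : realType) (A : set (V R)) : V R :=
  exist _ (sup ((@proj1_sig _ _) @` A)) (sup_in01 A).

(* Everything [gP] does is decided by the trace [X' ∩ X1]: direct images
   along [h1 + h2], singletons and unions all commute with taking the traces
   on [X1] and on [X2], and preserve whether the trace on [X1] is empty, so
   naturality and the two monad laws reduce to these set identities.  For
   [sup], the quantale's top is the real number 0 and its bottom is 1: adding
   top values to a nonempty set of values in [0,1] does not change its
   supremum, any set containing 1 has supremum 1, and a set of top values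
   (even the empty one) has supremum 0. *)

From mathcomp Require Import all_boot all_order all_algebra.
From mathcomp Require Import boolp classical_sets reals.
Set Implicit Arguments. Unset Strict Implicit. Unset Printing Implicit Defensive.
Import Order.TTheory.
Local Open Scope ring_scope.
Local Open Scope classical_set_scope.

Section SumSets.
Variables X1 X2 : Type.
Implicit Types A : set (X1 + X2).

Lemma image_copair (Y : Type) (f1 : X1 -> Y) (f2 : X2 -> Y) A :
  copair f1 f2 @` A = f1 @` (inl @^-1` A) `|` f2 @` (inr @^-1` A).
Proof.
apply/seteqP; split=> [_ [[x|y] Ax <-]|_ [[x Ax <-]|[y Ay <-]]].
- by left; exists x.
- by right; exists y.
- by exists (inl x).
- by exists (inr y).
Qed.

Lemma image_copair_inr (Y : Type) (f1 : X1 -> Y) (f2 : X2 -> Y) A :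
  inl @^-1` A = set0 -> copair f1 f2 @` A = f2 @` (inr @^-1` A).
Proof. by move=> A1_0; rewrite image_copair A1_0 image_set0 set0U. Qed.

Lemma preimage_inl_image_summap (Y1 Y2 : Type) (h1 : X1 -> Y1)
    (h2 : X2 -> Y2) A :
  inl @^-1` (summap h1 h2 @` A) = h1 @` (inl @^-1` A).
Proof.
apply/seteqP; split=> [_ [[x|y] Ax //= [<-]]|_ [x Ax <-]]; first by exists x.
by exists (inl x).
Qed.

Lemma preimage_inr_image_summap (Y1 Y2 : Type) (h1 : X1 -> Y1)
    (h2 : X2 -> Y2) A :
  inr @^-1` (summap h1 h2 @` A) = h2 @` (inr @^-1` A).
Proof.
apply/seteqP; split=> [_ [[x|y] Ay //= [<-]]|_ [y Ay <-]]; first by exists y.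
by exists (inr y).
Qed.

Variant gP_spec A : set X1 + set X2 -> Prop :=
  | GP_inl of inl @^-1` A !=set0 : gP_spec A (inl (inl @^-1` A))
  | GP_inr of inl @^-1` A = set0 : gP_spec A (inr (inr @^-1` A)).

Lemma gPP A : gP_spec A (gP A).
Proof.
rewrite /gP; case: pselect => [A1 | nA1]; first exact: GP_inl.
by apply: GP_inr; apply/nonemptyPn.
Qed.

Lemma gP_inl A : inl @^-1` A !=set0 -> gP A = inl (inl @^-1` A).
Proof. by case: gPP => // /nonemptyPn. Qed.

Lemma gP_inr A : inl @^-1` A = set0 -> gP A = inr (inr @^-1` A).
Proof. by case: gPP => // /[swap] -> [x]. Qed.

End SumSets.

Lemma gP_natural (X1 X2 Y1 Y2 : Type) (h1 : X1 -> Y1) (h2 : X2 -> Y2)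
    (A : set (X1 + X2)) :
  gP (Pmap (summap h1 h2) A) = summap (Pmap h1) (Pmap h2) (gP A).
Proof.
rewrite /Pmap; case: (gPP A) => [A1 | A1_0]; case: (gPP (summap h1 h2 @` A));
  rewrite ?preimage_inl_image_summap ?preimage_inr_image_summap //.
- by move=> /image_set0_set0 A1_0; case: A1; rewrite A1_0.
- by rewrite A1_0 image_set0 => -[].
Qed.

Section PowersetMonad.
Variables Y1 Y2 : Type.

Lemma gP_Peta (s : Y1 + Y2) : gP (Peta s) = summap (@Peta Y1) (@Peta Y2) s.
Proof.
rewrite /Peta; case: s => [a|b]; case: (gPP [set _]) => /= [A1 | A1_0].
- by congr inl; apply/seteqP; split=> [x [->] | x ->].
- by have : (set0 : set Y1) a by rewrite -A1_0.
- by case: A1.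
- by congr inr; apply/seteqP; split=> [x [->] | x ->].
Qed.

Lemma Pmu_preimage_inl_gP (A : set (set (Y1 + Y2))) :
  Pmu (inl @^-1` (Pmap (@gP Y1 Y2) A)) = inl @^-1` Pmu A.
Proof.
rewrite /Pmu /Pmap preimage_bigcup; apply/seteqP; split.
  move=> x [C [B AB]]; case: gPP => // _ [<-] Bx.
  by exists B.
move=> x [B AB Bx]; exists (inl @^-1` B) => //.
by exists B; rewrite // gP_inl //; exists x.
Qed.

Lemma preimage_inl_Pmap_gP_nonempty (A : set (set (Y1 + Y2))) :
  inl @^-1` (Pmap (@gP Y1 Y2) A) !=set0 <-> inl @^-1` Pmu A !=set0.
Proof.
split=> [[C [B AB]] | [x [B AB Bx]]].
  by case: gPP => // -[x Bx] _; exists x, B.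
by exists (inl @^-1` B), B; rewrite // gP_inl //; exists x.
Qed.

Lemma Pmu_preimage_inr_gP (A : set (set (Y1 + Y2))) :
  inl @^-1` Pmu A = set0 ->
  Pmu (inr @^-1` (Pmap (@gP Y1 Y2) A)) = inr @^-1` Pmu A.
Proof.
move=> A1_0; have B1_0 B : A B -> inl @^-1` B = set0.
  move=> AB; apply/nonemptyPn => -[x Bx].
  by suff : (set0 : set Y1) x by []; rewrite -A1_0; exists B.
rewrite /Pmu /Pmap preimage_bigcup; apply/seteqP; split.
  move=> y [C [B AB]]; rewrite gP_inr ?B1_0 // => -[<-] By.
  by exists B.
move=> y [B AB By]; exists (inr @^-1` B) => //.
by exists B; rewrite // gP_inr ?B1_0.
Qed.

Lemma gP_Pmu (A : set (set (Y1 + Y2))) :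
  gP (Pmu A) = summap (@Pmu Y1) (@Pmu Y2) (gP (Pmap (@gP Y1 Y2) A)).
Proof.
case: (gPP (Pmu A)) => [A1 | A1_0].
  by rewrite gP_inl ?preimage_inl_Pmap_gP_nonempty //= Pmu_preimage_inl_gP.
rewrite gP_inr /= ?Pmu_preimage_inr_gP //.
by apply/nonemptyPn; rewrite preimage_inl_Pmap_gP_nonempty; apply/nonemptyPn.
Qed.

End PowersetMonad.

Lemma sup_eq_max (R : realType) (S : set R) (m : R) :
  S m -> ubound S m -> sup S = m.
Proof.
move=> Sm ubm; apply/le_anti/andP; split.
  by apply: ge_sup => //; exists m.
by apply: ub_le_sup => //; exists m.
Qed.

Lemma sup_sub0 (R : realType) (S : set R) : S `<=` [set 0] -> sup S = 0.
Proof. by case/subset_set1 => ->; [exact: sup0 | exact: sup1]. Qed.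

Section Evaluation.
Variable R : realType.
Implicit Types S T : set (V R).

Lemma V_inj : injective (@proj1_sig R _ : V R -> R).
Proof. by move=> [x px] [y py] /= xy; apply: eq_exist. Qed.

Lemma ubound_V S : ubound (@proj1_sig R _ @` S) 1.
Proof. by move=> _ [[x px] _ <-] /=; case/andP: px. Qed.

Lemma evP_sub_top S : S `<=` [set topV R] -> evP S = topV R.
Proof.
move=> Stop; apply: V_inj => /=; apply: sup_sub0 => _ [v Sv <-].
by rewrite (Stop v Sv).
Qed.

Lemma evP_bot S : S (botV R) -> evP S = botV R.
Proof.
move=> Sbot; apply: V_inj => /=.
by apply: sup_eq_max; [exists (botV R) | exact: ubound_V].
Qed.

Lemma evP_setU_top S T :
  S !=set0 -> T `<=` [set topV R] -> evP (S `|` T) = evP S.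
Proof.
move=> [a Sa] Ttop; apply: V_inj => /=; rewrite image_setU setUC sup_setU //.
  by split; [exists (proj1_sig a), a | exists 1; exact: ubound_V].
move=> _ _ [u Tu <-] [[y py] _ <-] /=.
by rewrite (Ttop u Tu); case/andP: py.
Qed.

Variables X1 X2 : Type.
Implicit Types A : set (X1 + X2).

Lemma evP_copair_top (f1 : X1 -> V R) A :
  evP (Pmap (copair f1 (fun _ => topV R)) A)
  = copair (fun B => evP (Pmap f1 B)) (fun _ => topV R) (gP A).
Proof.
rewrite /Pmap; case: gPP => [[x Ax] | A1_0] /=.
  rewrite image_copair evP_setU_top //; first by exists (f1 x), x.
  by move=> _ [y _ <-].
by rewrite (image_copair_inr _ _ A1_0) evP_sub_top // => _ [y _ <-].
Qed.

Lemma evP_copair_bot (f2 : X2 -> V R) A :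
  evP (Pmap (copair (fun _ => botV R) f2) A)
  = copair (fun _ => botV R) (fun B => evP (Pmap f2 B)) (gP A).
Proof.
rewrite /Pmap; case: gPP => [[x Ax] | A1_0] /=.
  by apply: evP_bot; exists (inl x).
by rewrite image_copair_inr.
Qed.

End Evaluation.

Theorem mainTheorem12 (R : realType) :
  (* naturality *)
  (forall (X1 X2 Y1 Y2 : Type) (h1 : X1 -> Y1) (h2 : X2 -> Y2)
          (A : set (X1 + X2)),
      gP (Pmap (summap h1 h2) A) = summap (Pmap h1) (Pmap h2) (gP A)) /\
  (* compatibility with the unit *)
  (forall (Y1 Y2 : Type) (s : Y1 + Y2),
      gP (Peta s) = summap (@Peta Y1) (@Peta Y2) s) /\
  (* compatibility with the multiplication *)
  (forall (Y1 Y2 : Type) (A : set (set (Y1 + Y2))),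
      gP (Pmu A) = summap (@Pmu Y1) (@Pmu Y2) (gP (Pmap (@gP Y1 Y2) A))) /\
  (* well-behavedness with respect to ev_P = sup *)
  (forall (X1 X2 : Type) (f1 : X1 -> V R) (f2 : X2 -> V R),
     (forall A : set (X1 + X2),
        evP (Pmap (copair f1 (fun _ => topV R)) A)
        = copair (fun B => evP (Pmap f1 B)) (fun _ => topV R) (gP A)) /\
     (forall A : set (X1 + X2),
        evP (Pmap (copair (fun _ => botV R) f2) A)
        = copair (fun _ => botV R) (fun B => evP (Pmap f2 B)) (gP A)) /\
     (forall A : set (X1 + X2),
        evP (Pmap (copair (fun _ => botV R) (fun _ => topV R)) A)
        = copair (fun _ : set X1 => botV R) (fun _ : set X2 => topV R) (gP A))).
Proof.
split; first exact: gP_natural.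
split; first exact: gP_Peta.
split; first exact: gP_Pmu.
move=> X1 X2 f1 f2; split; [|split] => A.
- exact: evP_copair_top.
- exact: evP_copair_bot.
- rewrite evP_copair_bot; case: (gP A) => //= B.
  by apply: evP_sub_top => _ [y _ <-].
Qed.
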